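(* Let $A$ be a deterministic KAT automaton over $(\Sigma_0,T)$ and let $\mathfrak{s}$ assign to each $p\in\Sigma_0$ a deterministic KAT automaton $\mathfrak{s}(p)$ over $(\Sigma_1,T)$. Then $L(\mathsf{compose}^{\mathfrak{s}}(A))=\mathrm{apply}^{\mathfrak{s}'}(L(A))$, where $\mathfrak{s}'(p)=L(\mathfrak{s}(p))$.
   Context: Atoms $\mathsf{At}_T=2^T$. Guarded strings: words in $\mathsf{At}_T(\Sigma\mathsf{At}_T)^*$; guarded composition $w'\alpha\diamond\alpha x'=w'\alpha x'$ (defined only when the last atom of the left string equals the first atom of the right one). For a guarded language $L$ over $(\Sigma_0,T)$ and $\mathfrak{s}'$ mapping each $p\in\Sigma_0$ to a guarded language over $(\Sigma_1,T)$, $\mathrm{apply}^{\mathfrak{s}'}(L)$ is the set of all $\alpha_0\diamond w_0\diamond\alpha_1\diamond\cdots\diamond\alpha_{n-1}\diamond w_{n-1}\diamond\alpha_n$ (defined) where $\alpha_0p_0\alpha_1\cdots p_{n-1}\alpha_n\in L$ and each $w_i\in\mathfrak{s}'(p_i)$. Deterministic KAT automaton over $(\Sigma,T)$: $A=(Q,\delta,\iota)$, $Q$ finite, $\delta:Q\times\mathsf{At}_T\to\{\mathsf{accept},\mathsf{reject}\}+\Sigma\times Q$, $\iota:\mathsf{At}_T\to\{\mathsf{accept},\mathsf{reject}\}+\Sigma\times Q$. $L_A(\gamma)$ is the smallest set with $\gamma(\alpha)=\mathsf{accept}\Rightarrow\alpha\in L_A(\gamma)$ and $\gamma(\alpha)=(p,q)$,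 $w\in L_A(\delta(q,-))\Rightarrow\alpha pw\in L_A(\gamma)$; $L(A)=L_A(\iota)$. $\mathsf{compose}^{\mathfrak{s}}(A)$ for $A=(Q,\delta,\iota)$ and $\mathfrak{s}(p)=(Q_p,\delta_p,\iota_p)$: $\hat\delta(q,\alpha)=\mathsf{accept}$ if $\delta(q,\alpha)=\mathsf{accept}$; $=(p,q')$ if $\delta(q,\alpha)=(p,q')$ and $\iota_p(\alpha)\ne\mathsf{accept}$; $=\hat\delta(q',\alpha)$ if $\delta(q,\alpha)=(p,q')$ and $\iota_p(\alpha)=\mathsf{accept}$; $=\mathsf{reject}$ otherwise (including when the recursion does not terminate). $\hat\iota(\alpha)=\hat\delta(q,\alpha)$ if $\iota(\alpha)=(p,q)$ and $\iota_p(\alpha)=\mathsf{accept}$; else $\hat\iota(\alpha)=\iota(\alpha)$. Then $\mathsf{compose}^{\mathfrak{s}}(A)=(Q',\delta',\iota')$ over $(\Sigma_1,T)$, $Q'=\sum_{p\in\Sigma_0}Q_p\times Q$, with, for $q_p\in Q_p$, $q\in Q$: $\delta'((q_p,q),\alpha)=(p'',(q_p',q))$ if $\delta_p(q_p,\alpha)=(p'',q_p')$; $=(p'',(q_{p'},q'))$ if $\delta_p(q_p,\alpha)=\mathsf{accept}$, $\hat\delta(q,\alpha)=(p',q')$ and $\iota_{p'}(\alpha)=(p'',q_{p'})$; $=\mathsf{accept}$ if $\delta_p(q_p,\alpha)=\mathsf{accept}$ and $\hat\delta(q,\alpha)=\mathsf{accept}$; $=\mathsf{reject}$ otherwise. $\iota'(\alpha)=\mathsf{accept}$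 if $\hat\iota(\alpha)=\mathsf{accept}$; $=(p'',(q_{p'},q))$ if $\hat\iota(\alpha)=(p',q)$ and $\iota_{p'}(\alpha)=(p'',q_{p'})$; $=\mathsf{reject}$ otherwise. *)

From Stdlib Require Import ClassicalEpsilon.
From mathcomp Require Import all_boot.
From Stdlib Require List.
Set Implicit Arguments.
Unset Strict Implicit.
Unset Printing Implicit Defensive.

Section KAT.
Variables (T : finType).

Definition atom := {set T}.

(* Guarded strings over (Sigma, T): alpha_0 p_0 alpha_1 ... p_{n-1} alpha_n,
   represented as the first atom and the list of pairs (p_i, alpha_{i+1}). *)
Record gstring (Sigma : Type) := GS { ghead : atom; gtail : seq (Sigma * atom) }.

Definition glast (Sigma : Type) (x : gstring Sigma) : atom :=
  last (ghead x) (map snd (gtail x)).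

Definition gatom (Sigma : Type) (a : atom) : gstring Sigma := GS a [::].

Definition gcomp (Sigma : Type) (x y : gstring Sigma) : option (gstring Sigma) :=
  if glast x == ghead y then Some (GS (ghead x) (gtail x ++ gtail y)) else None.

Definition glang (Sigma : Type) := gstring Sigma -> Prop.

(* apply^{s'}(L): all defined alpha_0 <> w_0 <> alpha_1 <> ... <> w_{n-1} <> alpha_n
   with alpha_0 p_0 alpha_1 ... p_{n-1} alpha_n in L and w_i in s'(p_i). *)
Definition compose_all (S0 S1 : Type) (x : gstring S0) (ws : seq (gstring S1))
  : option (gstring S1) :=
  foldl (fun acc (pw : (S0 * atom) * gstring S1) =>
           obind (fun a => obind (fun b => gcomp b (gatom S1 pw.1.2)) (gcomp a pw.2)) acc)
        (Some (gatom S1 (ghead x))) (zip (gtail x) ws).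

Definition apply_subst (S0 S1 : Type) (s' : S0 -> glang S1) (L : glang S0) : glang S1 :=
  fun y => exists (x : gstring S0) (ws : seq (gstring S1)),
    [/\ L x, size ws = size (gtail x),
        List.Forall (fun pw : (S0 * atom) * gstring S1 => s' pw.1.1 pw.2) (zip (gtail x) ws)
      & compose_all x ws = Some y].

Inductive res (Sigma Q : Type) := Accept | Reject | Step of Sigma & Q.
Arguments Accept {Sigma Q}.
Arguments Reject {Sigma Q}.

Record kat_aut (Sigma : Type) := KatAut {
  kstate : finType;
  kdelta : kstate -> atom -> res Sigma kstate;
  kiota : atom -> res Sigma kstate }.

Inductive lang_from (Sigma : Type) (Q : Type) (delta : Q -> atom -> res Sigma Q)
  : (atom -> res Sigma Q) -> gstring Sigma -> Prop :=
| lang_accept (gamma : atom -> res Sigma Q) (a : atom) :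
    gamma a = Accept -> lang_from delta gamma (GS a [::])
| lang_step (gamma : atom -> res Sigma Q) (a : atom) (p : Sigma) (q : Q) (w : gstring Sigma) :
    gamma a = Step p q -> lang_from delta (delta q) w ->
    lang_from delta gamma (GS a ((p, ghead w) :: gtail w)).

Definition L (Sigma : Type) (A : kat_aut Sigma) : glang Sigma :=
  lang_from (@kdelta _ A) (@kiota _ A).

Section Compose.
Variables (S0 S1 : finType) (s : S0 -> kat_aut S1) (A : kat_aut S0).

Definition is_accept (Sigma Q : Type) (r : res Sigma Q) : bool :=
  if r is Accept then true else false.

(* n steps of the recursion defining \hat\delta; None = not yet terminated. *)
Fixpoint hat_fuel (n : nat) (q : kstate A) (a : atom) : option (res S0 (kstate A)) :=
  match n with
  | 0 => None
  | n'.+1 =>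
    match kdelta q a with
    | Accept => Some Accept
    | Step p q' => if is_accept (kiota (s p) a) then hat_fuel n' q' a
                   else Some (Step p q')
    | Reject => Some Reject
    end
  end.

Definition hat_delta (q : kstate A) (a : atom) : res S0 (kstate A) :=
  match excluded_middle_informative
          (exists nr : nat * res S0 (kstate A), hat_fuel nr.1 q a = Some nr.2) with
  | left H => (proj1_sig (constructive_indefinite_description _ H)).2
  | right _ => Reject
  end.

Definition hat_iota (a : atom) : res S0 (kstate A) :=
  match kiota A a with
  | Step p q => if is_accept (kiota (s p) a) then hat_delta q a else kiota A a
  | r => r
  end.

Definition cstate : finType := {p : S0 & (kstate (s p) * kstate A)%type}.

Definition cdelta (x : cstate) (a : atom) : res S1 cstate :=
  let p := tag x in
  let qp := (tagged x).1 in
  let q := (tagged x).2 in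
  match kdelta qp a with
  | Step p'' qp' => Step p'' (Tagged (fun p => (kstate (s p) * kstate A)%type) (qp', q))
  | Accept =>
    match hat_delta q a with
    | Accept => Accept
    | Step p' q' =>
      match kiota (s p') a with
      | Step p'' qp'' => Step p'' (Tagged (fun p => (kstate (s p) * kstate A)%type) (qp'', q'))
      | _ => Reject
      end
    | Reject => Reject
    end
  | Reject => Reject
  end.

Definition ciota (a : atom) : res S1 cstate :=
  match hat_iota a with
  | Accept => Accept
  | Step p' q =>
    match kiota (s p') a with
    | Step p'' qp => Step p'' (Tagged (fun p => (kstate (s p) * kstate A)%type) (qp, q))
    | _ => Reject
    end
  | Reject => Reject
  end.

Definition compose : kat_aut S1 := @KatAut S1 cstate cdelta ciota.

End Compose.
End KAT.

(* A word of apply^{s'}(L_A(gamma)) is a run of A from gamma in which every action p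
   is replaced by a word of L(s(p)), consecutive pieces being glued along a common atom;
   these expanded runs form the inductive language [lang_subst]. A state (q_p, q) of
   compose^s(A) stands for the rest of a word of s(p) read from q_p, followed by an
   expanded run of A from q ([cstate_lang]). These languages obey the one-step unfolding
   that characterises the languages of the states of compose^s(A), so the two coincide.
   An action p whose automaton accepts the current atom at once contributes only that
   atom, which is why \hat\delta skips it; a non-terminating \hat\delta would need an
   infinite chain of such skips, which no finite expansion realises, so rejecting in that
   case loses nothing. *)

From Stdlib Require Import ClassicalEpsilon.
From mathcomp Require Import all_boot.
From Stdlib Require List.
Set Implicit Arguments.
Unset Strict Implicit.
Unset Printing Implicit Defensive.
Arguments Accept {Sigma Q}.
Arguments Reject {Sigma Q}.

Section GuardedStrings.
Variables (T : finType) (Sigma : Type).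

Definition gconcat (L1 L2 : glang T Sigma) : glang T Sigma :=
  fun y => exists w v, [/\ L1 w, L2 v & gcomp w v = Some y].

Lemma gcomp_head (x y z : gstring T Sigma) : gcomp x y = Some z -> ghead z = ghead x.
Proof. by rewrite /gcomp; case: eqP => // _ [<-]. Qed.

Lemma gcomp_atoml a (y : gstring T Sigma) :
  gcomp (gatom Sigma a) y = if a == ghead y then Some y else None.
Proof. by rewrite /gcomp /glast /=; case: eqP => // ->; case: y. Qed.

Lemma gcomp_cons a p b t (y : gstring T Sigma) :
  gcomp (GS a ((p, b) :: t)) y = omap (fun r => GS a ((p, b) :: gtail r)) (gcomp (GS b t) y).
Proof. by rewrite /gcomp /glast /=; case: eqP. Qed.

End GuardedStrings.

Section Unfolding.
Variables (T : finType) (Sigma Q : Type) (d : Q -> atom T -> res Sigma Q).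

Definition outcome_lang (M : Q -> glang T Sigma) (r : res Sigma Q)
    (t : seq (Sigma * atom T)) : Prop :=
  match r, t with
  | Accept, [::] => True
  | Step p q, (p', b) :: t' => p = p' /\ M q (GS b t')
  | _, _ => False
  end.

Lemma lang_fromE gamma a t :
  lang_from d gamma (GS a t) <-> outcome_lang (fun q => lang_from d (d q)) (gamma a) t.
Proof.
split.
  move Ey: (GS a t) => y H; case: H Ey => [gamma' a' Ha | gamma' a' p q w Ha Hw] [-> ->].
    by rewrite Ha.
  by rewrite Ha; split=> //; case: w Hw.
case E: (gamma a) => [| |p q]; case: t => [|[p' b] t] //=.
  by move=> _; apply: lang_accept.
by case=> <- H; apply: (lang_step (w := GS b t) E H).
Qed.

Lemma lang_from_unique (M : Q -> glang T Sigma) :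
  (forall q a t, M q (GS a t) <-> outcome_lang M (d q a) t) ->
  forall gamma a t, lang_from d gamma (GS a t) <-> outcome_lang M (gamma a) t.
Proof.
move=> HM gamma a t; elim: t gamma a => [|[p b] t IH] gamma a; rewrite lang_fromE.
  by case: (gamma a).
case: (gamma a) => //= p' q.
by rewrite IH HM.
Qed.

Lemma gconcat_lang_fromE gamma (L2 : glang T Sigma) a t :
  gconcat (lang_from d gamma) L2 (GS a t) <->
  if gamma a is Accept then L2 (GS a t)
  else outcome_lang (fun q => gconcat (lang_from d (d q)) L2) (gamma a) t.
Proof.
split.
  case=> [[a' [|[p b] tw]]] [v [/lang_fromE Hw Hv]].
    rewrite -[GS a' [::]]/(gatom Sigma a') gcomp_atoml.
    case: eqP => // Ea [Ev]; subst v; rewrite /= in Ea; subst a'.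
    by case: (gamma a) Hw.
  rewrite gcomp_cons; case Er: (gcomp _ v) => [r|] //= [<- <-].
  case: (gamma a') Hw => //= p' q [-> Hx]; split=> //.
  exists (GS b tw), v; split=> //.
  by case: r Er => b' tr Er; have /= Eb := gcomp_head Er; rewrite Er Eb.
case E: (gamma a) => [| |p q].
- move=> Hv; exists (gatom Sigma a), (GS a t); split=> //.
    by apply/lang_fromE; rewrite E.
  by rewrite gcomp_atoml eqxx.
- by [].
case: t => [|[p' b] t] //= [<- [w [v [Hw Hv Hc]]]].
have Hb := gcomp_head Hc; case: w Hw Hc Hb => b' tw Hw Hc /= Eb; subst b'.
exists (GS a ((p, b) :: tw)), v; split=> //.
  by apply/lang_fromE; rewrite E.
by rewrite gcomp_cons Hc.
Qed.

End Unfolding.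

Section ComposeAll.
Variables (T : finType) (S0 S1 : Type).

Definition compose_step (acc : option (gstring T S1))
    (pw : (S0 * atom T) * gstring T S1) : option (gstring T S1) :=
  obind (fun a => obind (fun b => gcomp b (gatom S1 pw.1.2)) (gcomp a pw.2)) acc.

Lemma foldl_compose_step_None l : foldl compose_step None l = None.
Proof. by elim: l. Qed.

Lemma glast_cat a (t1 t2 : seq (S1 * atom T)) :
  glast (GS a (t1 ++ t2)) = glast (GS (glast (GS a t1)) t2).
Proof. by rewrite /glast /= map_cat last_cat. Qed.

Lemma foldl_compose_step_shift l (z : gstring T S1) :
  foldl compose_step (Some z) l =
  omap (fun r => GS (ghead z) (gtail z ++ gtail r))
       (foldl compose_step (Some (gatom S1 (glast z))) l).
Proof.
elim: l z => [|[[p b] w] l IH] [hz tz] /=; first by rewrite cats0.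
rewrite /compose_step /= /gcomp /= -/compose_step.
case: eqP => Hw /=; last by rewrite foldl_compose_step_None.
case: eqP => Hb; case: eqP => Hb' /=; rewrite ?foldl_compose_step_None //.
- rewrite IH [in RHS]IH /= !cats0 glast_cat.
  by case: (foldl _ _ _) => //= r; rewrite catA.
- by case: Hb'; rewrite -Hb glast_cat.
- by case: Hb; rewrite -Hb' glast_cat.
Qed.

Lemma compose_all_head (x : gstring T S0) (ws : seq (gstring T S1)) r :
  compose_all x ws = Some r -> ghead r = ghead x.
Proof.
by rewrite /compose_all -/compose_step foldl_compose_step_shift; case: (foldl _ _ _) => //= ? [<-].
Qed.

Lemma compose_all_nil a (ws : seq (gstring T S1)) :
  compose_all (GS a [::] : gstring T S0) ws = Some (gatom S1 a).
Proof. by case: ws. Qed.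

Lemma compose_all_cons a p b tx (w : gstring T S1) ws :
  compose_all (GS a ((p, b) :: tx) : gstring T S0) (w :: ws) =
  if ghead w == a then obind (gcomp w) (compose_all (GS b tx) ws) else None.
Proof.
rewrite {1}/compose_all /= -/compose_step gcomp_atoml.
have [_|_] := eqVneq a (ghead w); last by rewrite foldl_compose_step_None.
rewrite /= {1}/gcomp; case: eqP => /= Eb.
  rewrite foldl_compose_step_shift /= cats0.
  have -> : glast (GS (ghead w) (gtail w)) = b by rewrite -Eb; case: w {Eb}.
  case Er: (compose_all _ ws) => [r|] /=; rewrite -/(compose_all (GS b tx) ws) Er //=.
  by have /= Erb := compose_all_head Er; rewrite /gcomp Erb Eb eqxx.
rewrite foldl_compose_step_None.
case Er: (compose_all _ ws) => [r|] //=.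
by have /= Erb := compose_all_head Er; rewrite /gcomp Erb; case: eqP.
Qed.

End ComposeAll.

Section Substitution.
Variables (T : finType) (S0 S1 Q : Type).
Variables (d : Q -> atom T -> res S0 Q) (s' : S0 -> glang T S1).

Inductive lang_subst : (atom T -> res S0 Q) -> glang T S1 :=
| subst_accept gamma a : gamma a = Accept -> lang_subst gamma (gatom S1 a)
| subst_step gamma p q w v y : gamma (ghead w) = Step p q -> s' p w ->
    lang_subst (d q) v -> gcomp w v = Some y -> lang_subst gamma y.

Definition subst_outcome (r : res S0 Q) : glang T S1 :=
  match r with
  | Accept => fun y => gtail y = [::]
  | Reject => fun _ => False
  | Step p q => gconcat (s' p) (lang_subst (d q))
  end.

Lemma lang_substE gamma y : lang_subst gamma y <-> subst_outcome (gamma (ghead y)) y.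
Proof.
split.
  case=> [{}gamma a -> // | {}gamma p q w v {}y Hg Hw Hv Hc].
  by rewrite (gcomp_head Hc) Hg; exists w, v.
case E: (gamma (ghead y)) => [| |p q] /=.
- by case: y E => a t /= E ->; apply: subst_accept.
- by [].
case=> w [v [Hw Hv Hc]].
by apply: (subst_step _ Hw Hv Hc); rewrite -(gcomp_head Hc).
Qed.

Lemma apply_subst_lang_from gamma y :
  apply_subst s' (lang_from d gamma) y <-> lang_subst gamma y.
Proof.
split.
  case=> [[a tx] [ws [Hx Hsize Hws Hc]]].
  elim: tx gamma a ws y Hx Hsize Hws Hc => [|[p b] tx IH] gamma a [|w ws] y //= Hx Hsize Hws.
    rewrite compose_all_nil => -[<-]; apply: subst_accept.
    by move/lang_fromE: Hx; case: (gamma a).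
  case/List.Forall_cons_iff: Hws => /= Hw Hws.
  rewrite compose_all_cons; case: eqP => // Ha.
  case Er: (compose_all _ ws) => [r|] //= Hc.
  move/lang_fromE: Hx; case Eg: (gamma a) => [| |p' q] //= [Ep Hx]; subst p'.
  apply: (subst_step _ Hw (IH _ _ _ _ Hx (succn_inj Hsize) Hws Er) Hc).
  by rewrite Ha.
elim=> {gamma y} [gamma a Ha | gamma p q w v y Hg Hw _ [[b tx] [ws [Hx Hsize Hws Hv]]] Hc].
  by exists (gatom S0 a), [::]; split=> //; apply/lang_fromE; rewrite Ha.
exists (GS (ghead w) ((p, b) :: tx)), (w :: ws); split=> /=.
- by apply/lang_fromE; rewrite Hg.
- by rewrite Hsize.
- by constructor.
by rewrite compose_all_cons eqxx Hv.
Qed.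

End Substitution.

Section Composition.
Variables (T S0 S1 : finType) (s : S0 -> kat_aut T S1) (A : kat_aut T S0).

Local Notation subst := (lang_subst (@kdelta _ _ A) (fun p => L (s p))).
Local Notation outcome := (subst_outcome (@kdelta _ _ A) (fun p => L (s p))).

Definition settled (r : res S0 (kstate A)) (a : atom T) : bool :=
  if r is Step p _ then ~~ is_accept (kiota (s p) a) else true.

Lemma hat_fuel_settled n (q : kstate A) a r : hat_fuel s n q a = Some r -> settled r a.
Proof.
elim: n q => [|n IH] q //=.
case: (kdelta q a) => [| |p q']; [by case=> <- | by case=> <- |].
case E: (is_accept _); first exact: IH.
by move=> [<-] /=; rewrite E.
Qed.

Lemma hat_deltaP (q : kstate A) a :
  (exists n, hat_fuel s n q a = Some (hat_delta s q a)) \/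
  (forall n, hat_fuel s n q a = None) /\ hat_delta s q a = Reject.
Proof.
rewrite /hat_delta; case: excluded_middle_informative => [H | H].
  by left; case: constructive_indefinite_description => [[n r] /= Hn]; exists n.
right; split=> // n; case E: (hat_fuel s n q a) => [r|] //.
by case: H; exists (n, r).
Qed.

Lemma hat_delta_settled (q : kstate A) a : settled (hat_delta s q a) a.
Proof. by case: (hat_deltaP q a) => [[n /hat_fuel_settled] | [_ ->]]. Qed.

Lemma hat_iota_settled a : settled (hat_iota s A a) a.
Proof.
rewrite /hat_iota; case E: (kiota A a) => [| |p q] //.
by case Ep: (is_accept _) => //=; [exact: hat_delta_settled | rewrite Ep].
Qed.

Lemma outcome_skip p q a t : kiota (s p) a = Accept ->
  outcome (Step p q) (GS a t) <-> subst (kdelta q) (GS a t).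
Proof. by move=> Hp; rewrite /= /L gconcat_lang_fromE Hp. Qed.

Lemma subst_hat_fuel n (q : kstate A) a r t : hat_fuel s n q a = Some r ->
  subst (kdelta q) (GS a t) <-> outcome r (GS a t).
Proof.
elim: n q => [|n IH] q //=; rewrite lang_substE /=.
case: (kdelta q a) => [| |p q']; [by case=> <- | by case=> <- |].
case E: (kiota (s p) a) => [| |? ?] /=; [|by case=> <- ..].
by move=> Hf; exact: iff_trans (outcome_skip _ _ E) (IH _ Hf).
Qed.

Lemma subst_hat_fuel_defined (q : kstate A) y :
  subst (kdelta q) y -> exists n r, hat_fuel s n q (ghead y) = Some r.
Proof.
move Egamma: (kdelta q) => gamma H; elim: H q Egamma => {gamma y}.
  move=> gamma a Ha q Egamma; rewrite -{}Egamma in Ha.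
  by exists 1, Accept; rewrite /= Ha.
move=> gamma p q0 w v y Hg Hw _ IH Hc q Egamma; rewrite -{}Egamma in Hg.
rewrite (gcomp_head Hc); case E: (kiota (s p) (ghead w));
  [|by exists 1, (Step p q0); rewrite /= Hg E ..].
case: w Hw Hg Hc E => a [|[p' b] tw] Hw Hg Hc E /=; last first.
  by move/lang_fromE: Hw; rewrite E.
move: Hc; rewrite -[GS a [::]]/(gatom S1 a) gcomp_atoml; case: eqP => // Ea _.
have [n [r Hn]] := IH q0 erefl; rewrite -Ea in Hn.
by exists n.+1, r; rewrite /= Hg E.
Qed.

Lemma subst_hat_delta (q : kstate A) a t :
  subst (kdelta q) (GS a t) <-> outcome (hat_delta s q a) (GS a t).
Proof.
case: (hat_deltaP q a) => [[n Hn] | [Hn ->]]; first exact: subst_hat_fuel Hn.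
split=> // /subst_hat_fuel_defined [n [r]].
by rewrite Hn.
Qed.

Lemma subst_hat_iota a t :
  subst (kiota A) (GS a t) <-> outcome (hat_iota s A a) (GS a t).
Proof.
rewrite lang_substE /hat_iota /=; case: (kiota A a) => [| |p q] //.
case E: (kiota (s p) a) => //=.
exact: iff_trans (outcome_skip _ _ E) (subst_hat_delta _ _ _).
Qed.

Definition mk_cstate p (qp : kstate (s p)) (q : kstate A) : cstate s A :=
  Tagged (fun p => (kstate (s p) * kstate A)%type) (qp, q).

Definition resume (r : res S0 (kstate A)) (a : atom T) : res S1 (cstate s A) :=
  match r with
  | Accept => Accept
  | Step p q => if kiota (s p) a is Step p' qp then Step p' (mk_cstate qp q) else Reject
  | Reject => Reject
  end.

Definition cstate_lang (x : cstate s A) : glang T S1 :=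
  gconcat (lang_from (@kdelta _ _ (s (tag x))) (kdelta (tagged x).1))
          (subst (kdelta (tagged x).2)).

Lemma resume_outcome r a t : settled r a ->
  outcome r (GS a t) <-> outcome_lang cstate_lang (resume r a) t.
Proof.
case: r => [| |p q] //= Hr; first by case: t.
rewrite /L gconcat_lang_fromE.
by case: (kiota (s p) a) Hr => [| |p' qp] //= _; case: t => [|[? ?] ?].
Qed.

Lemma cstate_langE x a t : cstate_lang x (GS a t) <-> outcome_lang cstate_lang (cdelta x a) t.
Proof.
case: x => p [qp q]; rewrite /cstate_lang /= gconcat_lang_fromE /cdelta /=.
case: (kdelta qp a) => [| |p' qp'] //=.
exact: iff_trans (subst_hat_delta _ _ _) (resume_outcome _ (hat_delta_settled _ _)).
Qed.

Lemma lang_compose y : L (compose s A) y <-> subst (kiota A) y.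
Proof.
case: y => a t; rewrite /L /= (lang_from_unique cstate_langE) subst_hat_iota.
exact: iff_sym (resume_outcome _ (hat_iota_settled _)).
Qed.

End Composition.

Theorem proposition6p12 (T S0 S1 : finType) (A : kat_aut T S0)
  (s : S0 -> kat_aut T S1) :
  forall y : gstring T S1,
    L (compose s A) y <-> apply_subst (fun p => L (s p)) (L A) y.
Proof. by move=> y; rewrite lang_compose apply_subst_lang_from. Qed.
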